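(* Let $S=\bigoplus_{i\in\mathbb{Z}}S_i$ be an epsilon-strongly $\mathbb{Z}$-graded ring with principal component $R=S_0$. If $R$ is right (respectively left) noetherian, then $S$ is right (respectively left) noetherian.
   Context: All rings are associative with multiplicative identity $1\neq 0$. A ring $S$ is $\mathbb{Z}$-graded if $S=\bigoplus_{i\in\mathbb{Z}}S_i$ for additive subgroups $S_i$ with $S_iS_j\subseteq S_{i+j}$; $S_0$ is the principal component. $S$ is epsilon-strongly $\mathbb{Z}$-graded if (a) $S_iS_{-i}S_i=S_i$ for all $i$, and (b) for each $i$ the ideal $S_iS_{-i}$ of $S_0$ has a multiplicative identity. *)

From HB Require Import structures.
From mathcomp Require Import all_boot all_order all_algebra.
Set Implicit Arguments. Unset Strict Implicit. Unset Printing Implicit Defensive.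
Import GRing.Theory.
Local Open Scope ring_scope.


Section Defs.
Variable S : nzRingType.

Definition additive_subgroup (A : S -> Prop) : Prop :=
  A 0 /\ (forall x y, A x -> A y -> A (x - y)).

Definition mulset (A B : S -> Prop) : S -> Prop :=
  fun x => exists (n : nat) (a b : 'I_n -> S),
    (forall k, A (a k) /\ B (b k)) /\ x = \sum_(k < n) a k * b k.

Definition is_Zgrading (Sg : int -> S -> Prop) : Prop :=
  [/\ forall i, additive_subgroup (Sg i),
      forall x, exists (s : seq int) (f : int -> S),
        (forall i, Sg i (f i)) /\ x = \sum_(i <- s) f i,
      forall (s : seq int) (f : int -> S), uniq s ->
        (forall i, Sg i (f i)) -> \sum_(i <- s) f i = 0 ->
        forall i, i \in s -> f i = 0
    & forall i j x y, Sg i x -> Sg j y -> Sg (i + j)%R (x * y)].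

Definition epsilon_strong (Sg : int -> S -> Prop) : Prop :=
  is_Zgrading Sg /\
  forall i : int,
    (forall x, mulset (mulset (Sg i) (Sg (- i))) (Sg i) x <-> Sg i x) /\
    exists e, mulset (Sg i) (Sg (- i)) e /\
      forall x, mulset (Sg i) (Sg (- i)) x -> e * x = x /\ x * e = x.

Definition right_ideal_in (R0 I : S -> Prop) : Prop :=
  (forall x, I x -> R0 x) /\ I 0 /\
  (forall x y, I x -> I y -> I (x + y)) /\
  (forall x r, I x -> R0 r -> I (x * r)).

Definition left_ideal_in (R0 I : S -> Prop) : Prop :=
  (forall x, I x -> R0 x) /\ I 0 /\
  (forall x y, I x -> I y -> I (x + y)) /\
  (forall x r, I x -> R0 r -> I (r * x)).

Definition acc_chain (isI : (S -> Prop) -> Prop) : Prop :=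
  forall I : nat -> S -> Prop,
    (forall n, isI (I n)) ->
    (forall n x, I n x -> I n.+1 x) ->
    exists N, forall n, (N <= n)%N -> forall x, I n x <-> I N x.

Definition right_noetherian_in (R0 : S -> Prop) : Prop :=
  acc_chain (right_ideal_in R0).
Definition left_noetherian_in (R0 : S -> Prop) : Prop :=
  acc_chain (left_ideal_in R0).

Definition right_noetherian : Prop := right_noetherian_in (fun _ => True).
Definition left_noetherian : Prop := left_noetherian_in (fun _ => True).
End Defs.

(* A Hilbert basis argument. For a right ideal J of S and n >= 0, lead J n consists of the
   degree-n components of the elements of J supported in degrees [0, n]. The right unit of
   S_n lying in S_{-n} S_n shows that lead J n is determined by a right ideal of S_0,
   lead_ideal J n, which increases with n and with J; so in an ascending chain (I_k) the
   noetherianity of S_0 makes the doubly indexed family lead_ideal (I_k) n, and hence all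
   lead (I_k) n, stationary from some K on. A right ideal J' contained in J with the same
   leading terms equals J: nonnegative degrees are handled by induction on the top degree,
   and multiplying by the unit e of S_{-m} lying in S_m S_{-m} moves degree -m to nonnegative
   degrees while x - x e loses its degree -m component. The left case is the right case for
   the opposite ring. *)

From HB Require Import structures.
From mathcomp Require Import all_boot all_order all_algebra.
From mathcomp Require Import zify.
Set Implicit Arguments. Unset Strict Implicit. Unset Printing Implicit Defensive.
Import GRing.Theory.
Local Open Scope ring_scope.

Section SetProducts.
Variable S : nzRingType.
Implicit Types A B C M : S -> Prop.

Lemma mulset_ind A B (P : S -> Prop) x :
  P 0 -> (forall y z, P y -> P z -> P (y + z)) ->
  (forall a b, A a -> B b -> P (a * b)) -> mulset A B x -> P x.
Proof.
move=> P0 PD Pab [n [a [b [Hab ->]]]]; apply: big_ind => // k _.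
by case: (Hab k) => *; apply: Pab.
Qed.

Lemma mulset0 A B : mulset A B 0.
Proof. by exists 0%N, (fun _ => 0), (fun _ => 0); split=> [[]|]; rewrite ?big_ord0. Qed.

Lemma mulset1 A B a b : A a -> B b -> mulset A B (a * b).
Proof. by move=> Aa Bb; exists 1%N, (fun _ => a), (fun _ => b); rewrite big_ord1. Qed.

Lemma mulsetD A B x y : mulset A B x -> mulset A B y -> mulset A B (x + y).
Proof.
move=> [n [a [b [Hab ->]]]] [m [c [d [Hcd ->]]]].
exists (n + m)%N, (fun k => match split k with inl i => a i | inr j => c j end),
  (fun k => match split k with inl i => b i | inr j => d j end).
split; first by move=> k; case: (split k) => ?; [exact: Hab | exact: Hcd].
rewrite big_split_ord /=; congr (_ + _); apply: eq_bigr => i _.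
  by rewrite (unsplitK (inl i : 'I_n + 'I_m)).
by rewrite (unsplitK (inr i : 'I_n + 'I_m)).
Qed.

Lemma mulsetA A B C x : mulset (mulset A B) C x -> mulset A (mulset B C) x.
Proof.
apply: mulset_ind => [|y z|p c Hp Cc]; [exact: mulset0 | exact: mulsetD |].
apply: (@mulset_ind A B (fun p => mulset A (mulset B C) (p * c))) Hp.
- by rewrite mul0r; apply: mulset0.
- by move=> y z Hy Hz; rewrite mulrDl; apply: mulsetD.
- by move=> a b Aa Bb; rewrite -mulrA; apply: mulset1 => //; apply: mulset1.
Qed.

Lemma mulset_idl M B e x :
  (forall p, M p -> e * p = p) -> mulset M B x -> e * x = x.
Proof.
move=> eM; apply: (@mulset_ind _ _ (fun x => e * x = x)) => [|y z ey ez|p b Mp _].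
- exact: mulr0.
- by rewrite mulrDr ey ez.
- by rewrite mulrA eM.
Qed.

Lemma mulset_idr M A e x :
  (forall p, M p -> p * e = p) -> mulset A M x -> x * e = x.
Proof.
move=> Me; apply: (@mulset_ind _ _ (fun x => x * e = x)) => [|y z ye ze|a p _ Mp].
- exact: mul0r.
- by rewrite mulrDl ye ze.
- by rewrite -mulrA Me.
Qed.

Lemma mulset_conv A B x : mulset A B x -> mulset (S := S^c) B A x.
Proof. by case=> n [a [b [Hab ->]]]; exists n, b, a; split=> // k; case: (Hab k). Qed.

End SetProducts.

Section Ideals.
Variables (S : nzRingType) (R0 J : S -> Prop).
Hypothesis J_ideal : right_ideal_in R0 J.

Lemma ideal0 : J 0.
Proof. by case: J_ideal => _ []. Qed.

Lemma idealD x y : J x -> J y -> J (x + y).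
Proof. by case: J_ideal => _ [_ [JD _]]; apply: JD. Qed.

Lemma idealMr x r : J x -> R0 r -> J (x * r).
Proof. by case: J_ideal => _ [_ [_ JM]]; apply: JM. Qed.

Lemma ideal_sum (I : Type) (r : seq I) (F : I -> S) :
  (forall i, J (F i)) -> J (\sum_(i <- r) F i).
Proof. by move=> JF; apply: big_ind => //; [exact: ideal0 | exact: idealD]. Qed.

End Ideals.

Section RingIdeals.
Variables (S : nzRingType) (J : S -> Prop).
Hypothesis J_ideal : right_ideal_in (fun _ => True) J.

Lemma idealM x r : J x -> J (x * r).
Proof. by move=> Jx; apply: (idealMr J_ideal). Qed.

Lemma idealN x : J x -> J (- x).
Proof. by move=> Jx; rewrite -mulrN1; apply: idealM. Qed.

Lemma idealB x y : J x -> J y -> J (x - y).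
Proof. by move=> Jx Jy; apply: (idealD J_ideal) => //; apply: idealN. Qed.

End RingIdeals.

Section Chains.
Variable S : nzRingType.

Lemma chain_le (C : nat -> S -> Prop) : (forall n x, C n x -> C n.+1 x) ->
  forall m k x, (m <= k)%N -> C m x -> C k x.
Proof.
move=> CS m k x /subnKC <-; elim: (k - m)%N => [|j IH] Cx; first by rewrite addn0.
by rewrite addnS; apply/CS/IH.
Qed.

Lemma acc_chain_grid (isI : (S -> Prop) -> Prop) (B : nat -> nat -> S -> Prop) :
  acc_chain isI -> (forall n k, isI (B n k)) ->
  (forall n k x, B n k x -> B n.+1 k x) -> (forall n k x, B n k x -> B n k.+1 x) ->
  exists K, forall n k, (K <= k)%N -> forall x, B n k x -> B n K x.
Proof.
move=> acc isB BSn BSk.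
have Ble n n' k k' x : (n <= n')%N -> (k <= k')%N -> B n k x -> B n' k' x.
  move=> nn' kk' Bx; apply: (chain_le (C := B^~ k')) nn' _ => [*|]; first exact: BSn.
  by apply: (chain_le (C := B n)) kk' _ => // *; apply: BSk.
have [D stabD] := acc (fun k => B k k) (fun k => isB k k)
  (fun k x => Ble k k.+1 k k.+1 x (leqnSn k) (leqnSn k)).
have [K stabK] : exists K, forall n, (n < D)%N -> forall k, (K <= k)%N ->
    forall x, B n k x -> B n K x.
  elim: D {stabD} => [|d [K stabK]]; first by exists 0%N.
  have [Kd stabd] := acc (B d) (isB d) (BSk d).
  exists (maxn K Kd) => n; rewrite ltnS leq_eqVlt => /orP[/eqP-> | nd] k.
    rewrite geq_max => /andP[_ Kdk] x /(stabd k Kdk) Bx.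
    by apply: Ble Bx => //; apply: leq_maxr.
  rewrite geq_max => /andP[Kk _] x /(stabK n nd k Kk) Bx.
  by apply: Ble Bx => //; apply: leq_maxl.
exists (maxn K D) => n k; rewrite geq_max => /andP[Kk _] x Bx.
case: (ltnP n D) => [nD | Dn].
  by apply: (Ble n n K) (stabK n nD k Kk x Bx) => //; apply: leq_maxl.
have BD : B D D x.
  have Dnk : (D <= maxn n k)%N by rewrite leq_max Dn.
  by apply/(stabD _ Dnk); apply: Ble Bx; [apply: leq_maxl | apply: leq_maxr].
by apply: Ble BD => //; apply: leq_maxr.
Qed.

End Chains.

Section Grading.
Variables (S : nzRingType) (Sg : int -> S -> Prop).
Hypothesis grading : is_Zgrading Sg.

Lemma homog0 i : Sg i 0.
Proof. by case: grading => H _ _ _; case: (H i). Qed.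

Lemma homogB i x y : Sg i x -> Sg i y -> Sg i (x - y).
Proof. by case: grading => H _ _ _; case: (H i) => _; apply. Qed.

Lemma homogN i x : Sg i x -> Sg i (- x).
Proof. by move=> Hx; rewrite -sub0r; apply: homogB => //; apply: homog0. Qed.

Lemma homogD i x y : Sg i x -> Sg i y -> Sg i (x + y).
Proof. by move=> Hx Hy; rewrite -[y]opprK; apply: homogB => //; apply: homogN. Qed.

Lemma homogM i j x y : Sg i x -> Sg j y -> Sg (i + j) (x * y).
Proof. by case: grading => _ _ _; apply. Qed.

Lemma homog_mulset i j x : mulset (Sg i) (Sg j) x -> Sg (i + j) x.
Proof. by apply: mulset_ind; [exact: homog0 | exact: homogD | exact: homogM]. Qed.

Inductive homog_sum (P : int -> Prop) : S -> Prop :=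
| homog_sum_nil : homog_sum P 0
| homog_sum_cons d h x : P d -> Sg d h -> homog_sum P x -> homog_sum P (h + x).

Lemma homog_sum_sub (P Q : int -> Prop) x :
  (forall d, P d -> Q d) -> homog_sum P x -> homog_sum Q x.
Proof.
move=> PQ; elim=> [|d h y Pd Hh _ IH]; first exact: homog_sum_nil.
exact: homog_sum_cons (PQ d Pd) Hh IH.
Qed.

Lemma homog_sumD P x y : homog_sum P x -> homog_sum P y -> homog_sum P (x + y).
Proof.
elim=> [|d h z Pd Hh _ IH] Hy; first by rewrite add0r.
by rewrite -addrA; apply: homog_sum_cons Pd Hh (IH Hy).
Qed.

Lemma homog_sumN P x : homog_sum P x -> homog_sum P (- x).
Proof.
elim=> [|d h y Pd Hh _ IH]; first by rewrite oppr0; apply: homog_sum_nil.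
by rewrite opprD; apply: homog_sum_cons Pd (homogN Hh) IH.
Qed.

Lemma homog_sum_mulr (P Q : int -> Prop) p w x :
  Sg p w -> (forall d, P d -> Q (d + p)) -> homog_sum P x -> homog_sum Q (x * w).
Proof.
move=> Hw PQ; elim=> [|d h y Pd Hh _ IH]; first by rewrite mul0r; apply: homog_sum_nil.
by rewrite mulrDl; apply: (homog_sum_cons (d := d + p)) IH; [apply: PQ | apply: homogM].
Qed.

Lemma homog_sum_split (P Q : int -> Prop) d0 x :
  (forall d, P d -> d = d0 \/ Q d) -> homog_sum P x ->
  exists a y, [/\ Sg d0 a, homog_sum Q y & x = a + y].
Proof.
move=> PQ; elim=> [|d h x' Pd Hh _ [a [y [Ha Hy ->]]]].
  by exists 0, 0; split; [apply: homog0 | apply: homog_sum_nil | rewrite addr0].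
case: (PQ d Pd) => [Ed | Qd].
  by exists (h + a), y; split=> //; [apply: homogD => //; rewrite -Ed | rewrite addrA].
by exists a, (h + y); split=> //; [apply: homog_sum_cons Qd Hh Hy | rewrite addrCA].
Qed.

Lemma homog_sum_pred0 (P : int -> Prop) x : (forall d, ~ P d) -> homog_sum P x -> x = 0.
Proof. by move=> P0; case=> // d h y /P0. Qed.

Lemma homog_sum_bounded x : exists m n : nat, homog_sum (fun d => - m%:Z <= d < n%:Z) x.
Proof.
case: grading => _ decomp _ _; have [s [f [Hf ->]]] := decomp x.
elim: s => [|i s [m [n Hmn]]]; first by exists 0%N, 0%N; rewrite big_nil; apply: homog_sum_nil.
exists (maxn m `|i|), (maxn n `|i|.+1); rewrite big_cons; apply: homog_sum_cons => //.
  lia.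
by apply: homog_sum_sub Hmn => d; lia.
Qed.

Lemma is_Zgrading_conv : is_Zgrading (S := S^c) Sg.
Proof.
case: grading => ? ? ? homM; split=> // i j x y Hx Hy.
by rewrite addrC; exact: homM Hy Hx.
Qed.

End Grading.

Section LeadingTerms.
Variables (S : nzRingType) (Sg : int -> S -> Prop).
Hypothesis grading : is_Zgrading Sg.
Hypothesis right_unit :
  forall i, exists e, mulset (Sg (- i)) (Sg i) e /\ forall s, Sg i s -> s * e = s.

Implicit Types J : S -> Prop.
Local Notation ideal J := (right_ideal_in (fun _ : S => True) J).

Definition lead J (n : nat) a :=
  Sg n a /\ exists y, homog_sum Sg (fun d => 0 <= d < n%:Z) y /\ J (a + y).

(* Quantifying over all [p >= n] makes [lead_ideal J n] increasing in [n], which the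
   products [lead J n * S_{-n}] need not be. *)
Definition lead_ideal J (n : nat) z :=
  Sg 0 z /\ forall p : nat, (n <= p)%N -> forall v, Sg p v -> lead J p (z * v).

Lemma lead0 J n : ideal J -> lead J n 0.
Proof.
move=> idJ; split; first exact: homog0.
by exists 0; split; [apply: homog_sum_nil | rewrite addr0; exact: (ideal0 idJ)].
Qed.

Lemma leadD J n a b : ideal J -> lead J n a -> lead J n b -> lead J n (a + b).
Proof.
move=> idJ [Ha [y [Hy Jy]]] [Hb [z [Hz Jz]]]; split; first exact: homogD.
exists (y + z); split; first exact: homog_sumD.
by rewrite addrACA; exact: (idealD idJ Jy Jz).
Qed.

Lemma lead_mulr J m (p : nat) a v : ideal J -> lead J m a -> Sg p v -> lead J (m + p) (a * v).
Proof.
move=> idJ [Ha [y [Hy Jy]]] Hv; split; first by rewrite PoszD; apply: homogM.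
exists (y * v); split; last by rewrite -mulrDl; exact: (idealM idJ _ Jy).
by apply: (homog_sum_mulr grading) Hv _ Hy => // d; lia.
Qed.

Lemma lead_subset J J' n a : (forall x, J x -> J' x) -> lead J n a -> lead J' n a.
Proof. by move=> JJ' [Ha [y [Hy Jy]]]; split=> //; exists y; split=> //; apply: JJ'. Qed.

Lemma lead_ideal_right_ideal J n : ideal J -> right_ideal_in (Sg 0) (lead_ideal J n).
Proof.
move=> idJ; split; first by move=> z [].
split; first by split=> [|p _ v _]; [apply: homog0 | rewrite mul0r; apply: lead0].
split=> [x y [Hx Lx] [Hy Ly] | x r [Hx Lx] Hr].
  by split=> [|p np v Hv]; [apply: homogD | rewrite mulrDl; apply: leadD; auto].
split=> [|p np v Hv]; first by rewrite -[0]addr0; apply: homogM.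
by rewrite -mulrA; apply: Lx => //; rewrite -[p%:Z]add0r; apply: homogM.
Qed.

Lemma lead_idealS J n z : lead_ideal J n z -> lead_ideal J n.+1 z.
Proof. by case=> Hz Lz; split=> // p np; apply/Lz/ltnW. Qed.

Lemma lead_ideal_subset J J' n z :
  (forall x, J x -> J' x) -> lead_ideal J n z -> lead_ideal J' n z.
Proof. by move=> JJ' [Hz Lz]; split=> // p np v Hv; exact: (lead_subset JJ' (Lz p np v Hv)). Qed.

Lemma lead_of_lead_ideal J J' n a : ideal J -> ideal J' ->
  (forall z, lead_ideal J n z -> lead_ideal J' n z) -> lead J n a -> lead J' n a.
Proof.
move=> idJ idJ' LL' La; have [e [[k [u [v [Huv ->]]]] unit_e]] := right_unit n.
(* [a = a e = \sum_i (a u_i) v_i] and every [a u_i] lies in [lead_ideal J n]. *)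
rewrite -(unit_e a La.1) mulr_sumr.
apply: big_ind => [|b c|i _]; [exact: lead0 | exact: leadD |].
case: (Huv i) => Hu Hv; rewrite mulrA.
suff /LL' [_ Lau] : lead_ideal J n (a * u i) by apply: Lau.
split; first by rewrite -(addrN n%:Z); apply: homogM La.1 Hu.
move=> p np w Hw; rewrite -mulrA -(subnKC np); apply: lead_mulr => //.
by have := homogM grading Hu Hw; congr (Sg _ _); lia.
Qed.

Section SameLeadingTerms.
Variables J J' : S -> Prop.
Hypotheses (idJ : ideal J) (idJ' : ideal J') (J'J : forall x, J' x -> J x).
Hypothesis lead_sub : forall n a, lead J n a -> lead J' n a.

Lemma ideal_sub_of_lead_nonneg n x : homog_sum Sg (fun d => 0 <= d < n%:Z) x -> J x -> J' x.
Proof.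
elim: n x => [|n IH] x Hx Jx.
  by rewrite (homog_sum_pred0 _ Hx); [exact: (ideal0 idJ') | move=> d; lia].
have [a [y [Ha Hy Exy]]] : exists a y, [/\ Sg n a, homog_sum Sg (fun d => 0 <= d < n%:Z) y
    & x = a + y].
  by apply: (homog_sum_split grading) Hx => // d Hd; case: (d =P n%:Z); [left | right; lia].
have [_ [y' [Hy' J'ay']]] : lead J' n a by apply: lead_sub; split=> //; exists y; rewrite -Exy.
have Jyy' : J (y - y').
  have -> : y - y' = x - (a + y') by rewrite Exy opprD addrACA subrr add0r.
  exact: (idealB idJ Jx (J'J J'ay')).
have Hyy' : homog_sum Sg (fun d => 0 <= d < n%:Z) (y - y').
  by apply/homog_sumD/(homog_sumN grading).
have -> : x = (y - y') + (a + y') by rewrite Exy addrCA subrK.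
exact: (idealD idJ' (IH _ Hyy' Jyy') J'ay').
Qed.

Lemma ideal_sub_of_lead_bounded m n x :
  homog_sum Sg (fun d => - m%:Z <= d < n%:Z) x -> J x -> J' x.
Proof.
elim: m x => [|m IH] x Hx Jx.
  by apply: (ideal_sub_of_lead_nonneg (n := n)) Jx; apply: homog_sum_sub Hx => d; lia.
have [b [y [Hb Hy Exby]]] : exists b y, [/\ Sg (- m.+1%:Z) b,
    homog_sum Sg (fun d => - m%:Z <= d < n%:Z) y & x = b + y].
  by apply: (homog_sum_split grading) Hx => d Hd; case: (d =P - m.+1%:Z); [left | right; lia].
have [e [e_prod unit_e]] := right_unit (- m.+1%:Z); rewrite opprK in e_prod.
have e0 : Sg 0 e by rewrite -(addrN m.+1%:Z); apply: homog_mulset.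
(* multiplying [x] by an element of [S_{m+1}] lands in nonnegative degrees *)
have J'xe : J' (x * e).
  case: e_prod => k [s [t [Hst ->]]]; rewrite mulr_sumr; apply: (ideal_sum idJ') => i.
  case: (Hst i) => Hs _; rewrite mulrA; apply: (idealM idJ').
  apply: (ideal_sub_of_lead_nonneg (n := (n + m.+1)%N) _ (idealM idJ _ Jx)).
  by apply: (homog_sum_mulr grading) Hs _ Hx => d; lia.
have Hxxe : homog_sum Sg (fun d => - m%:Z <= d < n%:Z) (x - x * e).
  rewrite Exby mulrDl (unit_e b Hb) opprD addrACA subrr add0r.
  apply: (homog_sumD Hy); apply: (homog_sumN grading).
  by apply: (homog_sum_mulr grading) e0 _ Hy => d; rewrite addr0.
rewrite -(subrK (x * e) x).
exact: (idealD idJ' (IH _ Hxxe (idealB idJ Jx (idealM idJ _ Jx))) J'xe).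
Qed.

Lemma ideal_sub_of_lead x : J x -> J' x.
Proof. by have [m [n Hx]] := homog_sum_bounded grading x; apply: ideal_sub_of_lead_bounded Hx. Qed.

End SameLeadingTerms.

Lemma right_noetherian_graded : right_noetherian_in (Sg 0) -> right_noetherian S.
Proof.
move=> noeth I idI chainI.
have [K HK] := acc_chain_grid (B := fun n k => lead_ideal (I k) n) noeth
  (fun n k => lead_ideal_right_ideal n (idI k)) (fun n k z => @lead_idealS _ _ _)
  (fun n k z => lead_ideal_subset (chainI k)).
exists K => k Kk x; split; last exact: chain_le.
apply: (ideal_sub_of_lead (idI k) (idI K)) => [y | n a]; first exact: chain_le.
by apply: (lead_of_lead_ideal (idI k) (idI K)) => z; apply: HK.
Qed.

End LeadingTerms.

Section EpsilonStrong.
Variables (S : nzRingType) (Sg : int -> S -> Prop).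
Hypothesis eps : epsilon_strong Sg.

Lemma epsilon_left_unit i :
  exists e, mulset (Sg i) (Sg (- i)) e /\ forall s, Sg i s -> e * s = s.
Proof.
have [S_i [e [e_prod unit_e]]] := eps.2 i.
by exists e; split=> // s /S_i; apply: mulset_idl => p /unit_e [].
Qed.

Lemma epsilon_right_unit i :
  exists e, mulset (Sg (- i)) (Sg i) e /\ forall s, Sg i s -> s * e = s.
Proof.
have [S_i _] := eps.2 i; have [_ [e [e_prod unit_e]]] := eps.2 (- i).
rewrite opprK in e_prod unit_e.
by exists e; split=> // s /S_i /mulsetA; apply: mulset_idr => p /unit_e [].
Qed.

End EpsilonStrong.

Theorem proposition3p6 (S : nzRingType) (Sg : int -> S -> Prop) :
  epsilon_strong Sg ->
  (right_noetherian_in (Sg 0%R) -> right_noetherian S) /\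
  (left_noetherian_in (Sg 0%R) -> left_noetherian S).
Proof.
move=> eps; split; first exact: right_noetherian_graded eps.1 (epsilon_right_unit eps).
apply: (right_noetherian_graded (S := S^c) (is_Zgrading_conv eps.1)) => i.
have [e [e_prod unit_e]] := epsilon_left_unit eps i.
by exists e; split; [exact: mulset_conv | exact: unit_e].
Qed.
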